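(* Let $p>2$ be a prime. For integers $a,b$ define the Kloosterman sum $K(a,b)=\sum_{x=1}^{p-1} e_p\left(ax+b\overline{x}\right)$, where $\overline{x}$ denotes the inverse of $x$ modulo $p$ and $e_p(\alpha)=\exp\left(\frac{2\pi i\alpha}{p}\right)$. Then for any integers $a,b$ with $p\nmid ab$ we have \[ K(a,b)^2 = p + \sum_{l=1}^{p} \left(\frac{l^2-4l}{p}\right) K(a,lb), \] where $\left(\frac{\cdot}{p}\right)$ is the Legendre symbol.
   Context: $\left(\frac{\cdot}{p}\right)$ denotes the Legendre symbol modulo $p$ (with value $0$ at multiples of $p$). *)

From mathcomp Require Import all_boot all_algebra.
From mathcomp Require Import reals trigo.
From mathcomp Require Export complex.
Import GRing.Theory Num.Theory.
Local Open Scope ring_scope.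
Local Open Scope complex_scope.

Definition ep (R : realType) (p : nat) (k : int) : R[i] :=
  cos (2 * pi * k%:~R / p%:R) +i* sin (2 * pi * k%:~R / p%:R).

Definition inv_mod (p x : nat) : nat := nat_of_ord ((x%:R : 'F_p)^-1).

Definition kloosterman (R : realType) (p : nat) (a b : int) : R[i] :=
  \sum_(1 <= x < p) ep R p (a * x%:Z + b * (inv_mod p x)%:Z).

Definition legendre (p : nat) (a : int) : int :=
  if (p%:Z %| a)%Z then 0
  else if [exists x : 'I_p, (p%:Z %| (x%:Z) ^+ 2 - a)%Z] then 1 else -1.

(* Everything is transported to the prime field F_p, where e_p becomes an additive character
   psi (epF below) with sum_y psi (y c) = 0 for c <> 0.  Opening the square and substituting
   y = x w gives K(a,b)^2 = sum_(w <> 0) sum_(x <> 0) psi (a x (1 + w) + b (1 + w^-1) / x); for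
   w <> -1 the change of variables x -> x / (1 + w) turns the inner sum into
   K(a, b (w + 2 + w^-1)), while w = -1 contributes p - 1 = p + K(a, 0).  On the other side
   (l^2 - 4l / p) = N(l^2 - 4l) - 1, where N(d) counts the square roots of d; the -1 part vanishes
   because sum_l K(a, l b) = 0, and the pairs (l, t) with t^2 = l^2 - 4l are parametrised by
   w <> 0 through l = w + 2 + w^-1, t = w - w^-1, with inverse w = (l + t - 2) / 2. *)
From mathcomp Require Import all_boot all_algebra.
From mathcomp Require Import reals trigo complex.
From mathcomp Require Import order ring.
Set Implicit Arguments.
Unset Strict Implicit.
Import Order.TTheory GRing.Theory Num.Theory.
Local Open Scope ring_scope.
Local Open Scope complex_scope.

Lemma periodicz {U V : zmodType} {f : U -> V} {T : U} :
  periodic f T -> forall (m : int) x, f (x + T *~ m) = f x.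
Proof.
move=> fT [] n x; first exact: periodicn.
by rewrite NegzE mulrNz -[in RHS](subrK (T *+ n.+1) x) periodicn.
Qed.

Section AdditiveCharacter.
Variables (R : realType) (p : nat).

Lemma epD (j k : int) : ep R p (j + k) = ep R p j * ep R p k.
Proof.
rewrite /ep intrD mulrDr mulrDl cosD sinD.
by apply/eqP; rewrite eq_complex /=; apply/andP; split; apply/eqP; ring.
Qed.

Lemma ep_eq_mod (j k : int) : (0 < p)%N -> (p%:Z %| k - j)%Z -> ep R p k = ep R p j.
Proof.
move=> p_gt0 /dvdzP [q kj]; have -> : k = j + q * p%:Z by rewrite -kj addrC subrK.
have pn0 : (p%:R : R) != 0 by rewrite pnatr_eq0 -lt0n.
rewrite /ep; have -> : 2 * (pi : R) * (j + q * p%:Z)%:~R / p%:R =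
                       2 * pi * j%:~R / p%:R + (pi *+ 2) *~ q.
  by rewrite -(mulrzr (pi *+ 2 : R) q) intrD intrM; field.
by rewrite (periodicz (@cosD2pi R)) (periodicz (@sinD2pi R)).
Qed.

Lemma ep1_neq1 : (2 < p)%N -> ep R p 1 != 1.
Proof.
move=> p_gt2; rewrite /ep eq_complex /= mulr1 negb_and; apply/orP; right.
have p_pos : (0 : R) < p%:R by rewrite ltr0n (ltn_trans _ p_gt2).
rewrite gt_eqF // sin_gt0_pi // divr_gt0 ?mulr_gt0 ?pi_gt0 //=.
by rewrite ltr_pdivrMr // mulrC ltr_pM2l ?pi_gt0 // (ltr_nat R 2 p).
Qed.

End AdditiveCharacter.

Section PrimeField.
Variables (R : realType) (p : nat).
Hypothesis p_pr : prime p.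
Local Notation F := 'F_p.

Let p_gt0 : (0 < p)%N := prime_gt0 p_pr.

Lemma intr_Fp_eq0 (z : int) : ((z%:~R : F) == 0) = (p%:Z %| z)%Z.
Proof.
rewrite dvdzE; case: z => n; last rewrite NegzE rmorphN oppr_eq0.
all: by rewrite -(dvdn_pcharf (pchar_Fp p_pr)).
Qed.

Lemma intr_Fp_ord (x : F) : ((nat_of_ord x)%:Z)%:~R = x.
Proof. exact: natr_Zp. Qed.

Definition epF (x : F) : R[i] := ep R p (nat_of_ord x)%:Z.

Lemma ep_epF (k : int) : ep R p k = epF k%:~R.
Proof.
by apply: ep_eq_mod => //; rewrite -intr_Fp_eq0 rmorphB /= intr_Fp_ord subrr.
Qed.

Lemma epFD (x y : F) : epF (x + y) = epF x * epF y.
Proof.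
have -> : x + y = ((nat_of_ord x)%:Z + (nat_of_ord y)%:Z)%:~R.
  by rewrite rmorphD /= !intr_Fp_ord.
by rewrite -ep_epF epD.
Qed.

Lemma epF0 : epF 0 = 1.
Proof. by rewrite /epF /ep /= mulr0 mul0r cos0 sin0. Qed.

Lemma sum_Fp_nat (G : F -> R[i]) : \sum_(0 <= x < p) G x%:R = \sum_(y : F) G y.
Proof.
rewrite -[in RHS](eq_bigr _ (fun y _ => congr1 G (natr_Zp y))) /=.
by rewrite -(big_mkord xpredT (fun i => G i%:R)) (Fp_cast p_pr).
Qed.

Lemma sum_Fp_nat1 (G : F -> R[i]) : \sum_(1 <= l < p.+1) G l%:R = \sum_(y : F) G y.
Proof.
rewrite big_nat_recr //= (pchar_Fp_0 p_pr) addrC -big_ltn //.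
exact: sum_Fp_nat.
Qed.

Definition kloostermanF (al be : F) : R[i] :=
  \sum_(x : F | x != 0) epF (al * x + be * x^-1).

Lemma kloostermanE (a b : int) : kloosterman R p a b = kloostermanF a%:~R b%:~R.
Proof.
rewrite /kloosterman /kloostermanF.
have := sum_Fp_nat (fun y => epF (a%:~R * y + b%:~R * y^-1)).
rewrite big_ltn // (bigD1 0) //= => /addrI <-; apply: eq_bigr => x _.
by rewrite ep_epF rmorphD !rmorphM /= /inv_mod intr_Fp_ord.
Qed.

Hypothesis p_gt2 : (2 < p)%N.

Lemma epF1_neq1 : epF 1 != 1.
Proof. by rewrite -[1 : F]/((1%:Z)%:~R) -ep_epF ep1_neq1. Qed.

Lemma sum_epF_mul (c : F) : c != 0 -> \sum_(y : F) epF (y * c) = 0.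
Proof.
move=> c0; set S := \sum_(y : F) epF (y * c).
have S_shift : S * epF 1 = S.
  rewrite /S mulr_suml [RHS](reindex_inj (addIr c^-1)) /=.
  by apply: eq_bigr => y _; rewrite mulrDl mulVf // epFD.
have : S * (epF 1 - 1) = 0 by rewrite mulrBr S_shift mulr1 subrr.
by move/eqP; rewrite mulf_eq0 subr_eq0 (negPf epF1_neq1) orbF => /eqP.
Qed.

Lemma two_Fp_neq0 : (2 : F) != 0.
Proof.
rewrite -(dvdn_pcharf (pchar_Fp p_pr)).
by apply/negP => /(dvdn_leq (isT : (0 < 2)%N)); rewrite leqNgt p_gt2.
Qed.

Definition nsqrt (d : F) : nat := #|[pred t : F | t ^+ 2 == d]|.

Lemma legendre_nsqrt (z : int) : (legendre p z)%:~R = (nsqrt z%:~R)%:R - 1 :> R[i].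
Proof.
rewrite /legendre /nsqrt -intr_Fp_eq0.
have natr_ord (x : 'I_p) : (((nat_of_ord x)%:Z)%:~R : F) = (nat_of_ord x)%:R by [].
case: eqP => [-> | z_neq0].
  rewrite (eq_card (B := pred1 0)) ?card1 ?subrr // => t.
  by rewrite !inE sqrf_eq0.
case: existsP => [[x] | no_root].
  rewrite -intr_Fp_eq0 rmorphB rmorphXn /= natr_ord subr_eq0 => /eqP x2.
  rewrite (eq_card (B := pred2 x%:R (- x%:R))) => [|t]; last by rewrite !inE -x2 eqf_sqr.
  have xN : (x%:R : F) != - x%:R.
    rewrite -subr_eq0 opprK -mulr2n -[_ *+ 2]mulr_natr mulf_eq0 (negPf two_Fp_neq0) orbF.
    by apply/eqP => x0; apply: z_neq0; rewrite -x2 x0 expr0n.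
  by rewrite card2 xN -addn1 natrD addrK.
rewrite eq_card0 ?sub0r // => t; rewrite !inE; apply/negP => /eqP t2; apply: no_root.
have t_lt : (nat_of_ord t < p)%N by rewrite -{2}(Fp_cast p_pr) ltn_ord.
exists (Ordinal t_lt).
by rewrite -intr_Fp_eq0 rmorphB rmorphXn /= intr_Fp_ord t2 subrr.
Qed.

Lemma sum_kloostermanF_scale (al be : F) :
  be != 0 -> \sum_(y : F) kloostermanF al (y * be) = 0.
Proof.
move=> be0; rewrite /kloostermanF exchange_big /=; apply: big1 => x x0.
transitivity (epF (al * x) * \sum_(y : F) epF (y * (be * x^-1))).
  by rewrite mulr_sumr; apply: eq_bigr => y _; rewrite -epFD mulrA.
by rewrite sum_epF_mul ?mulr0 // mulf_neq0 ?invr_eq0.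
Qed.

Lemma kloostermanF0 (al : F) : al != 0 -> kloostermanF al 0 = -1.
Proof.
move=> al0; have := sum_epF_mul al0; rewrite (bigD1 0) // mul0r epF0 => sum0.
apply: (addrI 1); rewrite subrr -[RHS]sum0; congr (_ + _).
by apply: eq_bigr => x _; rewrite mul0r addr0 mulrC.
Qed.

Lemma sum_epF_pair (al be w : F) : w != 0 -> w != -1 ->
  \sum_(x : F | x != 0) epF (al * x + be * x^-1) * epF (al * (x * w) + be * (x * w)^-1)
  = kloostermanF al (be * (w + 2 + w^-1)).
Proof.
move=> w0 wN1; have w1 : 1 + w != 0 by rewrite addrC addr_eq0.
rewrite /kloostermanF [RHS](reindex_inj (mulIf w1)) /=.
apply: eq_big => [x | x x0]; first by rewrite mulf_eq0 (negPf w1) orbF.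
by rewrite -epFD; congr epF; field; rewrite x0 w0 w1.
Qed.

Lemma kloostermanF_sqr (al be : F) : al != 0 ->
  kloostermanF al be ^+ 2 =
    p%:R + \sum_(w : F | w != 0) kloostermanF al (be * (w + 2 + w^-1)).
Proof.
move=> al0; rewrite expr2 {1}/kloostermanF mulr_suml.
transitivity (\sum_(w : F | w != 0) \sum_(x : F | x != 0)
    epF (al * x + be * x^-1) * epF (al * (x * w) + be * (x * w)^-1)).
  rewrite exchange_big; apply: eq_bigr => x x0.
  rewrite /kloostermanF mulr_sumr (reindex_inj (mulfI x0)) /=.
  by apply: eq_bigl => w; rewrite mulf_eq0 (negPf x0).
have N1_neq0 : (-1 : F) != 0 by rewrite oppr_eq0 oner_eq0.
have pairN1 : \sum_(x : F | x != 0)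
    epF (al * x + be * x^-1) * epF (al * (x * -1) + be * (x * -1)^-1) = p%:R - 1.
  rewrite (eq_bigr (fun _ => 1)) => [|x _]; last first.
    by rewrite -epFD -[RHS]epF0; congr epF; rewrite mulrN1 invrN; ring.
  rewrite sumr_const (eq_card (B := predC1 0)) // cardC1 card_Fp //.
  by rewrite -[in RHS](prednK p_gt0) -natr1 addrK.
rewrite (bigD1 (-1)) // [in RHS](bigD1 (-1)) //= pairN1.
have -> : be * (-1 + 2 + (-1)^-1) = 0 by rewrite invrN1; ring.
rewrite kloostermanF0 // addrA; congr (_ + _).
by apply: eq_bigr => w /andP [wN1 w0]; rewrite sum_epF_pair.
Qed.

Lemma sum_nsqrt_kloostermanF (al be : F) :
  \sum_(y : F) (nsqrt (y ^+ 2 - 4 * y))%:R * kloostermanF al (y * be) =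
  \sum_(w : F | w != 0) kloostermanF al (be * (w + 2 + w^-1)).
Proof.
have two0 := two_Fp_neq0; have four0 : (4 : F) != 0.
  by rewrite (_ : 4 = 2 * 2) ?mulf_neq0 //; ring.
under eq_bigr => y _ do rewrite mulr_natl -sumr_const.
rewrite pair_big_dep /=.
rewrite (reindex_onto (fun w : F => (w + 2 + w^-1, w - w^-1))
                      (fun lt : F * F => (lt.1 + lt.2 - 2) / 2)); last first.
  case=> l t /= /eqP t2.
  have -> : ((l + t - 2) / 2)^-1 = (l - t - 2) / 2.
    apply: mulr1_eq.
    have -> : (l + t - 2) / 2 * ((l - t - 2) / 2) = ((l - 2) ^+ 2 - t ^+ 2) / 4.
      by field; rewrite four0 two0.
    by rewrite t2; field.
  by congr pair; field; rewrite ?two0.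
apply: eq_big => [w | w _]; last by rewrite mulrC.
rewrite inE; case: (eqVneq w 0) => [-> | w0].
  rewrite invr0 !subr0 !addr0 add0r expr0n /=.
  have -> : (2 : F) ^+ 2 - 4 * 2 = - 4 by ring.
  by rewrite eq_sym oppr_eq0 (negPf four0).
by apply/andP; split; apply/eqP => /=; field; rewrite ?w0 ?two0.
Qed.

End PrimeField.

Theorem mainTheorem1 (R : realType) (p : nat) (a b : int) :
  prime p -> (2 < p)%N -> ~~ (p%:Z %| a * b)%Z ->
  kloosterman R p a b ^+ 2 =
    p%:R + \sum_(1 <= l < p.+1)
             (legendre p (l%:Z ^+ 2 - 4 * l%:Z))%:~R * kloosterman R p a (l%:Z * b).
Proof.
move=> p_pr p_gt2; rewrite -(intr_Fp_eq0 p_pr) rmorphM mulf_eq0 negb_or => /andP [a0 b0].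
rewrite kloostermanE // kloostermanF_sqr // -sum_nsqrt_kloostermanF //; congr (_ + _).
rewrite -[LHS]subr0 -[X in _ - X](sum_kloostermanF_scale R p_pr p_gt2 a%:~R b0).
rewrite -sumrB -(sum_Fp_nat1 p_pr).
apply: eq_bigr => l _; rewrite legendre_nsqrt // kloostermanE //.
by rewrite rmorphB rmorphXn !rmorphM /= mulrBl mul1r.
Qed.
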